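(* Every non-strictly slope-disjoint straight-line drawing of a rooted tree is monotone and planar.
   Context: All tree edges are directed away from the root; $T_u$ is the subtree rooted at $u$. The slope of a directed edge $(u,v)$ is the angle (mod $2\pi$) of the counter-clockwise rotation taking the horizontal half-line from $u$ towards increasing $x$ onto the half-line from $u$ through $v$. A drawing is non-strictly slope-disjoint if to every vertex $u$ one can assign angles $0\le a_1(u)<a_2(u)\le\pi$ such that: (1) every edge $e$ of $T_u$ and the edge entering $u$ from its parent satisfies $a_1(u)<slope(e)<a_2(u)$; (2) for every vertex $u$ and child $v$: $a_1(u)\le a_1(v)<a_2(v)\le a_2(u)$; (3) for two distinct children $v_1,v_2$ of the same vertex: either $a_1(v_1)<a_2(v_1)\le a_1(v_2)<a_2(v_2)$ or $a_1(v_2)<a_2(v_2)\le a_1(v_1)<a_2(v_1)$. A path $p_0,\dots,p_k$ in a straight-line drawing is monotone if there is a line $\ell$ such that the orthogonal projections of $p_0,\dots,p_k$ onto $\ell$ appear along $\ell$ in this order. A straight-line drawing of a graph is monotone if every pair of vertices is connected by a monotone path; it is planar if no two edges cross. *)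

From Stdlib Require Import Reals Lra List.
Import ListNotations.
Open Scope R_scope.

(* A rooted tree with n vertices is encoded by vertices 0..n-1, root 0, and a
   parent function par with par v < v for 0 < v < n.  Its (directed) edges are
   (par v, v) for 0 < v < n, directed away from the root. *)
Definition rooted_tree (n : nat) (par : nat -> nat) : Prop :=
  forall v, (0 < v < n)%nat -> (par v < v)%nat.

Inductive is_desc (n : nat) (par : nat -> nat) (u : nat) : nat -> Prop :=
| desc_refl : is_desc n par u u
| desc_step : forall w x, is_desc n par u w -> (0 < x < n)%nat -> par x = w ->
    is_desc n par u x.

Definition point := (R * R)%type.

Definition drawing (n : nat) (pos : nat -> point) : Prop :=
  forall u v, (u < n)%nat -> (v < n)%nat -> pos u = pos v -> u = v.

Definition slope_is (A B : point) (theta : R) : Prop :=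
  0 <= theta < 2 * PI /\
  exists r, 0 < r /\ fst B - fst A = r * cos theta /\ snd B - snd A = r * sin theta.

Definition slope_in (A B : point) (lo hi : R) : Prop :=
  exists theta, slope_is A B theta /\ lo < theta < hi.

Definition non_strictly_slope_disjoint (n : nat) (par : nat -> nat)
    (pos : nat -> point) : Prop :=
  exists a1 a2 : nat -> R,
    (forall u, (u < n)%nat -> 0 <= a1 u < a2 u /\ a2 u <= PI) /\
    (forall u w, (u < n)%nat -> (w < n)%nat -> is_desc n par u w -> w <> u ->
        slope_in (pos (par w)) (pos w) (a1 u) (a2 u)) /\
    (forall u, (0 < u < n)%nat -> slope_in (pos (par u)) (pos u) (a1 u) (a2 u)) /\
    (forall v, (0 < v < n)%nat -> a1 (par v) <= a1 v /\ a1 v < a2 v /\ a2 v <= a2 (par v)) /\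
    (forall v1 v2, (0 < v1 < n)%nat -> (0 < v2 < n)%nat -> v1 <> v2 -> par v1 = par v2 ->
        (a1 v1 < a2 v1 <= a1 v2 /\ a1 v2 < a2 v2) \/
        (a1 v2 < a2 v2 <= a1 v1 /\ a1 v1 < a2 v1)).

Definition adjacent (n : nat) (par : nat -> nat) (u v : nat) : Prop :=
  ((0 < v < n)%nat /\ par v = u) \/ ((0 < u < n)%nat /\ par u = v).

Definition tree_path (n : nat) (par : nat -> nat) (p : list nat) (u v : nat) : Prop :=
  p <> [] /\ nth 0 p 0%nat = u /\ last p 0%nat = v /\
  (forall i, (S i < length p)%nat -> adjacent n par (nth i p 0%nat) (nth (S i) p 0%nat)).

Definition proj (d P : point) : R := fst d * fst P + snd d * snd P.

Definition monotone_path (pos : nat -> point) (p : list nat) : Prop :=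
  exists d : point, d <> (0, 0) /\
    forall i, (S i < length p)%nat ->
      proj d (pos (nth i p 0%nat)) < proj d (pos (nth (S i) p 0%nat)).

Definition monotone_drawing (n : nat) (par : nat -> nat) (pos : nat -> point) : Prop :=
  forall u v, (u < n)%nat -> (v < n)%nat ->
    exists p, tree_path n par p u v /\ monotone_path pos p.

Definition on_segment (A B P : point) : Prop :=
  exists t, 0 <= t <= 1 /\
    fst P = fst A + t * (fst B - fst A) /\ snd P = snd A + t * (snd B - snd A).

Definition planar_drawing (n : nat) (par : nat -> nat) (pos : nat -> point) : Prop :=
  forall v w, (0 < v < n)%nat -> (0 < w < n)%nat -> v <> w ->
    forall P, on_segment (pos (par v)) (pos v) P -> on_segment (pos (par w)) (pos w) P ->
      exists x, (x = par v \/ x = v) /\ (x = par w \/ x = w) /\ P = pos x.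

(* The tree path between two vertices climbs from one of them to their lowest common
   ancestor [c] and descends to the other.  Every edge points upwards (its slope lies in
   [(0, PI)]), so when one vertex is an ancestor of the other the path is monotone in
   the vertical direction.  Otherwise the two branches leave [c] through distinct
   children [c1], [c2], and the edges below them have slopes in the disjoint intervals
   [(a1 c1, a2 c1)] and [(a1 c2, a2 c2)]; projecting onto the normal of a separating
   angle makes one branch rise and the other fall, so the whole path is monotone.
   The same projections place two edges on either side of [pos c] (or of the upper
   endpoint of the lower edge, in the nested case), so they can only meet at a common
   endpoint. *)

From Stdlib Require Import Reals List Sorted Wf_nat Lra Lia.
Import ListNotations.
Open Scope R_scope.

Definition normal (s : R) : point := (- sin s, cos s).

Definition opp (d : point) : point := (- fst d, - snd d).

Lemma proj_opp d P : proj (opp d) P = - proj d P.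
Proof. unfold proj, opp; simpl; ring. Qed.

Lemma opp_involutive d : opp (opp d) = d.
Proof. destruct d; unfold opp; simpl; f_equal; ring. Qed.

Lemma opp_neq0 d : d <> (0, 0) -> opp d <> (0, 0).
Proof.
  intros Hd E. apply Hd. rewrite <- (opp_involutive d), E. unfold opp; simpl; f_equal; ring.
Qed.

Lemma normal_neq0 s : normal s <> (0, 0).
Proof.
  intros E. injection E as Es Ec. pose proof (sin2_cos2 s) as H.
  unfold Rsqr in H. nra.
Qed.

Lemma proj_normal_sub s (A B : point) r th :
  fst B - fst A = r * cos th -> snd B - snd A = r * sin th ->
  proj (normal s) B - proj (normal s) A = r * sin (th - s).
Proof.
  intros E1 E2. rewrite sin_minus.
  transitivity (- sin s * (fst B - fst A) + cos s * (snd B - snd A));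
    [unfold proj, normal; simpl; ring | rewrite E1, E2; ring].
Qed.

(* The normal [normal s] has angle [s + PI/2]: it separates the slopes in [(s, s + PI)]
   from those in [(s - PI, s)]. *)
Lemma slope_in_normal_lt A B lo hi s :
  slope_in A B lo hi -> s <= lo -> hi <= s + PI -> proj (normal s) A < proj (normal s) B.
Proof.
  intros (th & (_ & r & Hr & E1 & E2) & Hth) Hlo Hhi.
  pose proof (proj_normal_sub s A B r th E1 E2).
  assert (0 < sin (th - s)) by (apply sin_gt_0; lra). nra.
Qed.

Lemma slope_in_normal_gt A B lo hi s :
  slope_in A B lo hi -> s - PI <= lo -> hi <= s -> proj (normal s) B < proj (normal s) A.
Proof.
  intros (th & (_ & r & Hr & E1 & E2) & Hth) Hlo Hhi.
  pose proof (proj_normal_sub s A B r th E1 E2).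
  assert (sin (th - s) < 0) by (apply sin_lt_0_var; lra). nra.
Qed.

Lemma on_segment_sym A B P : on_segment A B P -> on_segment B A P.
Proof.
  intros (t & Ht & E1 & E2). exists (1 - t). split; [lra|].
  split; [rewrite E1 | rewrite E2]; ring.
Qed.

Lemma segments_touch d A B C D P :
  proj d A < proj d B -> proj d B <= proj d C -> proj d C < proj d D ->
  on_segment A B P -> on_segment C D P -> P = B /\ P = C.
Proof.
  intros HAB HBC HCD (t & Ht & Px & Py) (t' & Ht' & Qx & Qy).
  assert (EP : proj d P = proj d A + t * (proj d B - proj d A))
    by (unfold proj; rewrite Px, Py; ring).
  assert (EQ : proj d P = proj d C + t' * (proj d D - proj d C))
    by (unfold proj; rewrite Qx, Qy; ring).
  assert (t = 1) by nra. assert (t' = 0) by nra. subst t t'.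
  destruct P, B, C; simpl in *. split; f_equal; lra.
Qed.

Section LocallySortedLists.

Context {A : Type}.
Implicit Types (Q : A -> A -> Prop) (l : list A).

Lemma LocallySorted_app Q l1 x l2 :
  LocallySorted Q (l1 ++ [x]) -> LocallySorted Q (x :: l2) ->
  LocallySorted Q (l1 ++ x :: l2).
Proof.
  induction l1 as [|a [|b l1] IH]; simpl; intros H1 H2; auto.
  - inversion H1; subst. constructor; auto.
  - inversion H1; subst. constructor; auto.
Qed.

Lemma LocallySorted_rev Q l :
  LocallySorted (fun a b => Q b a) l -> LocallySorted Q (rev l).
Proof.
  induction 1 as [| a | a b l _ IH Hab]; simpl; try constructor.
  rewrite <- app_assoc. apply LocallySorted_app; [exact IH|].
  repeat constructor. exact Hab.
Qed.

Lemma LocallySorted_nth Q l x0 : LocallySorted Q l ->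
  forall i, (S i < length l)%nat -> Q (nth i l x0) (nth (S i) l x0).
Proof.
  induction 1 as [| a | a b l _ IH Hab]; intros i Hi; simpl in Hi; try lia.
  destruct i; [exact Hab|]. apply (IH i). simpl. lia.
Qed.

Definition climbs Q (u c : A) : Prop :=
  exists L, hd c L = u /\ LocallySorted Q (L ++ [c]).

Lemma climbs_refl Q c : climbs Q c c.
Proof. exists []. split; [reflexivity | constructor]. Qed.

Lemma climbs_cons Q a w c : Q a w -> climbs Q w c -> climbs Q a c.
Proof.
  intros Haw (L & Hw & HL). exists (a :: L). split; [reflexivity|].
  destruct L as [|b L]; simpl in *; subst; constructor; assumption.
Qed.

Lemma climbs_snoc Q u x c : climbs Q u x -> Q x c -> climbs Q u c.
Proof.
  intros (L & Hu & HL) Hxc. exists (L ++ [x]). split.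
  - destruct L; exact Hu.
  - rewrite <- app_assoc. apply LocallySorted_app; [exact HL|]. repeat constructor. exact Hxc.
Qed.

Lemma climbs_join Q u v c x0 :
  climbs Q u c -> climbs (fun a b => Q b a) v c ->
  exists p, p <> [] /\ nth 0 p x0 = u /\ last p x0 = v /\ LocallySorted Q p.
Proof.
  intros (L1 & Hu & H1) (L2 & Hv & H2).
  exists (L1 ++ c :: rev L2). split; [|split; [|split]].
  - destruct L1; discriminate.
  - destruct L1; exact Hu.
  - destruct L2 as [|b L2]; simpl in Hv |- *.
    + rewrite last_last. exact Hv.
    + rewrite app_comm_cons, app_assoc, last_last. exact Hv.
  - apply LocallySorted_app; [exact H1|].
    change (c :: rev L2) with (rev [c] ++ rev L2). rewrite <- rev_app_distr.
    apply LocallySorted_rev. exact H2.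
Qed.

End LocallySortedLists.

Section RootedTree.

Variables (n : nat) (par : nat -> nat).
Hypothesis tree : rooted_tree n par.

Lemma desc_le x y : is_desc n par x y -> (x <= y)%nat.
Proof.
  induction 1 as [| w z _ IH Hz <-]; [lia|].
  pose proof (tree z Hz). lia.
Qed.

Lemma desc_child x y : is_desc n par x y -> y <> x ->
  exists c, (0 < c < n)%nat /\ par c = x /\ is_desc n par c y.
Proof.
  induction 1 as [| w z Hw IH Hz Hp]; [congruence|]. intros _.
  destruct (Nat.eq_dec w x) as [-> | Hwx].
  - exists z. split; [exact Hz|]. split; [exact Hp | constructor].
  - destruct (IH Hwx) as (c & Hc & Hpc & Hcw).
    exists c. split; [exact Hc|]. split; [exact Hpc | econstructor; eauto].
Qed.

Definition separated_by_siblings (u v : nat) : Prop :=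
  exists c1 c2, (0 < c1 < n)%nat /\ (0 < c2 < n)%nat /\ c1 <> c2 /\ par c1 = par c2 /\
    is_desc n par c1 u /\ is_desc n par c2 v.

Definition tree_position (u v : nat) : Prop :=
  is_desc n par v u \/ is_desc n par u v \/ separated_by_siblings u v.

Lemma tree_position_sym u v : tree_position u v -> tree_position v u.
Proof.
  intros [H | [H | (c1 & c2 & H1 & H2 & H12 & Hp & Hu & Hv)]]; unfold tree_position; auto.
  right; right. exists c2, c1.
  split; [exact H2|]. split; [exact H1|]. split; [congruence|]. split; [congruence|]. auto.
Qed.

Lemma tree_position_parent u v : (0 < u < n)%nat -> (v < u)%nat ->
  tree_position (par u) v -> tree_position u v.
Proof.
  intros Hu Hvu [H | [H | (c1 & c2 & H1 & H2 & H12 & Hp & Hc1 & Hc2)]].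
  - left. eapply desc_step; [exact H | exact Hu | reflexivity].
  - destruct (Nat.eq_dec v (par u)) as [-> | Hv].
    + left. eapply desc_step; [constructor | exact Hu | reflexivity].
    + destruct (desc_child _ _ H Hv) as (c & Hc & Hpc & Hcv).
      destruct (Nat.eq_dec c u) as [-> | Hcu].
      * pose proof (desc_le _ _ Hcv). lia.
      * right; right. exists u, c.
        split; [exact Hu|]. split; [exact Hc|]. split; [congruence|]. split; [congruence|].
        split; [constructor | exact Hcv].
  - right; right. exists c1, c2.
    split; [exact H1|]. split; [exact H2|]. split; [exact H12|]. split; [exact Hp|].
    split; [eapply desc_step; [exact Hc1 | exact Hu | reflexivity] | exact Hc2].
Qed.

Lemma desc_trichotomy u v : (u < n)%nat -> (v < n)%nat -> tree_position u v.
Proof.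
  remember (u + v)%nat as k eqn:Hk. revert u v Hk.
  induction k as [k IH] using lt_wf_ind. intros u v -> Hu Hv.
  destruct (Nat.lt_trichotomy u v) as [Huv | [<- | Hvu]].
  - apply tree_position_sym, tree_position_parent; try lia.
    pose proof (tree v ltac:(lia)). apply tree_position_sym, (IH (u + par v)%nat); lia.
  - left. constructor.
  - apply tree_position_parent; try lia.
    pose proof (tree u ltac:(lia)). apply (IH (par u + v)%nat); lia.
Qed.

Lemma climbs_subtree (Q : nat -> nat -> Prop) x w :
  (forall a, is_desc n par x a -> (0 < a < n)%nat -> Q a (par a)) ->
  is_desc n par x w -> climbs Q w x.
Proof.
  intros HQ. induction 1 as [| w z Hw IH Hz <-]; [apply climbs_refl|].
  apply (climbs_cons _ _ (par z)); [|exact IH]. apply HQ; [econstructor; eauto | exact Hz].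
Qed.

End RootedTree.

Section SlopeDisjointDrawing.

Variables (n : nat) (par : nat -> nat) (pos : nat -> point) (a1 a2 : nat -> R).
Hypothesis tree : rooted_tree n par.
Hypothesis injective_pos : drawing n pos.
Hypothesis angle_range : forall u, (u < n)%nat -> 0 <= a1 u < a2 u /\ a2 u <= PI.
Hypothesis subtree_slope : forall u w, (u < n)%nat -> (w < n)%nat -> is_desc n par u w ->
  w <> u -> slope_in (pos (par w)) (pos w) (a1 u) (a2 u).
Hypothesis entering_slope : forall u, (0 < u < n)%nat ->
  slope_in (pos (par u)) (pos u) (a1 u) (a2 u).
Hypothesis siblings_disjoint : forall v1 v2, (0 < v1 < n)%nat -> (0 < v2 < n)%nat ->
  v1 <> v2 -> par v1 = par v2 ->
  (a1 v1 < a2 v1 <= a1 v2 /\ a1 v2 < a2 v2) \/ (a1 v2 < a2 v2 <= a1 v1 /\ a1 v1 < a2 v1).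

Lemma edge_slope_in_subtree x a : (x < n)%nat -> is_desc n par x a -> (0 < a < n)%nat ->
  slope_in (pos (par a)) (pos a) (a1 x) (a2 x).
Proof.
  intros Hx Hxa Ha. destruct (Nat.eq_dec a x) as [-> | Hax].
  - exact (entering_slope x Ha).
  - apply subtree_slope; auto; lia.
Qed.

Definition up_increasing (d : point) (x : nat) : Prop :=
  forall a, is_desc n par x a -> (0 < a < n)%nat -> proj d (pos a) < proj d (pos (par a)).

Definition down_increasing (d : point) (x : nat) : Prop :=
  forall a, is_desc n par x a -> (0 < a < n)%nat -> proj d (pos (par a)) < proj d (pos a).

Lemma up_increasing_opp d x : down_increasing d x -> up_increasing (opp d) x.
Proof. intros H a Hxa Ha. rewrite !proj_opp. specialize (H a Hxa Ha). lra. Qed.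

Lemma down_increasing_opp d x : up_increasing d x -> down_increasing (opp d) x.
Proof. intros H a Hxa Ha. rewrite !proj_opp. specialize (H a Hxa Ha). lra. Qed.

Lemma up_increasing_normal_PI x : up_increasing (normal PI) x.
Proof.
  intros a _ Ha. destruct (angle_range a ltac:(lia)).
  apply (slope_in_normal_gt _ _ (a1 a) (a2 a)); [apply entering_slope; exact Ha | lra | lra].
Qed.

Lemma down_increasing_normal_0 x : down_increasing (normal 0) x.
Proof.
  intros a _ Ha. destruct (angle_range a ltac:(lia)).
  apply (slope_in_normal_lt _ _ (a1 a) (a2 a)); [apply entering_slope; exact Ha | lra | lra].
Qed.

Lemma ordered_subtrees_separated x y : (x < n)%nat -> (y < n)%nat -> a2 x <= a1 y ->
  up_increasing (normal (a2 x)) x /\ down_increasing (normal (a2 x)) y.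
Proof.
  intros Hx Hy Hxy. destruct (angle_range x Hx), (angle_range y Hy).
  split; intros a Ha Han.
  - apply (slope_in_normal_gt _ _ (a1 x) (a2 x)); [apply edge_slope_in_subtree; auto | lra | lra].
  - apply (slope_in_normal_lt _ _ (a1 y) (a2 y)); [apply edge_slope_in_subtree; auto | lra | lra].
Qed.

Lemma siblings_separated c1 c2 : (0 < c1 < n)%nat -> (0 < c2 < n)%nat -> c1 <> c2 ->
  par c1 = par c2 ->
  exists d, d <> (0, 0) /\ up_increasing d c1 /\ down_increasing d c2.
Proof.
  intros H1 H2 H12 Hp.
  destruct (siblings_disjoint c1 c2 H1 H2 H12 Hp) as [[[_ O] _] | [[_ O] _]].
  - exists (normal (a2 c1)). split; [apply normal_neq0|].
    apply ordered_subtrees_separated; [lia | lia | exact O].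
  - destruct (ordered_subtrees_separated c2 c1 ltac:(lia) ltac:(lia) O) as [Hu Hd].
    exists (opp (normal (a2 c2))). split; [apply opp_neq0, normal_neq0|].
    split; [apply up_increasing_opp | apply down_increasing_opp]; assumption.
Qed.

Lemma up_increasing_below_parent d x y : up_increasing d x -> (0 < x < n)%nat ->
  is_desc n par x y -> proj d (pos y) < proj d (pos (par x)).
Proof.
  intros Hup Hx. induction 1 as [| w z Hw IH Hz <-].
  - apply Hup; [constructor | exact Hx].
  - specialize (Hup z ltac:(econstructor; eauto) Hz). lra.
Qed.

Lemma up_increasing_parent d x y : up_increasing d x -> (0 < x < n)%nat ->
  is_desc n par x y -> proj d (pos (par y)) <= proj d (pos (par x)).
Proof.
  intros Hup Hx Hy. inversion Hy as [| w z Hw Hz Hp]; [lra|].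
  subst. left. apply (up_increasing_below_parent d x); assumption.
Qed.

Lemma down_increasing_parent d x y : down_increasing d x -> (0 < x < n)%nat ->
  is_desc n par x y -> proj d (pos (par x)) <= proj d (pos (par y)).
Proof.
  intros Hdown Hx Hy.
  pose proof (up_increasing_parent (opp d) x y (up_increasing_opp d x Hdown) Hx Hy).
  rewrite !proj_opp in H. lra.
Qed.

Definition mono_step (d : point) (a b : nat) : Prop :=
  adjacent n par a b /\ proj d (pos a) < proj d (pos b).

Lemma climbs_up d x w : up_increasing d x -> is_desc n par x w -> climbs (mono_step d) w x.
Proof.
  intros Hup. apply climbs_subtree. intros a Hxa Ha.
  split; [right; split; [exact Ha | reflexivity] | apply Hup; assumption].
Qed.

Lemma climbs_down d x w : down_increasing d x -> is_desc n par x w ->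
  climbs (fun a b => mono_step d b a) w x.
Proof.
  intros Hdown. apply climbs_subtree. intros a Hxa Ha.
  split; [left; split; [exact Ha | reflexivity] | apply Hdown; assumption].
Qed.

Lemma monotone_path_through d c u v : d <> (0, 0) ->
  climbs (mono_step d) u c -> climbs (fun a b => mono_step d b a) v c ->
  exists p, tree_path n par p u v /\ monotone_path pos p.
Proof.
  intros Hd Hu Hv.
  destruct (climbs_join _ _ _ _ 0%nat Hu Hv) as (p & Hne & H0 & Hl & Hs).
  exists p. split.
  - split; [exact Hne|]. split; [exact H0|]. split; [exact Hl|].
    intros i Hi. apply (LocallySorted_nth _ _ _ Hs i Hi).
  - exists d. split; [exact Hd|]. intros i Hi. apply (LocallySorted_nth _ _ _ Hs i Hi).
Qed.

Lemma monotone : monotone_drawing n par pos.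
Proof.
  intros u v Hu Hv.
  destruct (desc_trichotomy n par tree u v Hu Hv)
    as [H | [H | (c1 & c2 & H1 & H2 & H12 & Hp & Hc1 & Hc2)]].
  - apply (monotone_path_through (normal PI) v); [apply normal_neq0 | | apply climbs_refl].
    apply climbs_up; [apply up_increasing_normal_PI | exact H].
  - apply (monotone_path_through (normal 0) u); [apply normal_neq0 | apply climbs_refl |].
    apply climbs_down; [apply down_increasing_normal_0 | exact H].
  - destruct (siblings_separated c1 c2 H1 H2 H12 Hp) as (d & Hd & Hup & Hdown).
    apply (monotone_path_through d (par c1)); [exact Hd | |].
    + apply (climbs_snoc _ _ c1); [apply climbs_up; assumption|].
      split; [right; split; [exact H1 | reflexivity] | apply Hup; [constructor | exact H1]].
    + apply (climbs_snoc _ _ c2); [apply climbs_down; assumption|]. rewrite Hp.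
      split; [left; split; [exact H2 | reflexivity] | apply Hdown; [constructor | exact H2]].
Qed.

Lemma planar_nested v w : (0 < v < n)%nat -> (0 < w < n)%nat -> is_desc n par w v -> v <> w ->
  forall P, on_segment (pos (par v)) (pos v) P -> on_segment (pos (par w)) (pos w) P ->
  par v = w /\ P = pos w.
Proof.
  intros Hv Hw Hwv Hne P Sv Sw.
  destruct (desc_child n par w v Hwv Hne) as (c & Hc & Hpc & Hcv).
  pose proof (up_increasing_normal_PI c) as Hup.
  assert (Hv1 : proj (normal PI) (pos v) < proj (normal PI) (pos (par v)))
    by (apply Hup; assumption).
  assert (Hv2 : proj (normal PI) (pos (par v)) <= proj (normal PI) (pos w))
    by (rewrite <- Hpc; apply (up_increasing_parent _ c); assumption).
  assert (Hw1 : proj (normal PI) (pos w) < proj (normal PI) (pos (par w)))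
    by (apply (up_increasing_normal_PI w); [constructor | exact Hw]).
  destruct (segments_touch _ _ _ _ _ P Hv1 Hv2 Hw1 (on_segment_sym _ _ _ Sv)
              (on_segment_sym _ _ _ Sw)) as [E1 E2].
  split; [|exact E2].
  apply injective_pos; [pose proof (tree v Hv); lia | lia | congruence].
Qed.

Lemma planar_siblings v w c1 c2 : (0 < v < n)%nat -> (0 < w < n)%nat ->
  (0 < c1 < n)%nat -> (0 < c2 < n)%nat -> c1 <> c2 -> par c1 = par c2 ->
  is_desc n par c1 v -> is_desc n par c2 w ->
  forall P, on_segment (pos (par v)) (pos v) P -> on_segment (pos (par w)) (pos w) P ->
  par v = par w /\ P = pos (par v).
Proof.
  intros Hv Hw H1 H2 H12 Hp Hc1 Hc2 P Sv Sw.
  destruct (siblings_separated c1 c2 H1 H2 H12 Hp) as (d & _ & Hup & Hdown).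
  pose proof (up_increasing_parent _ _ _ Hup H1 Hc1).
  pose proof (down_increasing_parent _ _ _ Hdown H2 Hc2).
  assert (Hv1 : proj d (pos v) < proj d (pos (par v))) by (apply Hup; assumption).
  assert (Hw1 : proj d (pos (par w)) < proj d (pos w)) by (apply Hdown; assumption).
  assert (Hvw : proj d (pos (par v)) <= proj d (pos (par w))) by (rewrite Hp in *; lra).
  destruct (segments_touch _ _ _ _ _ P Hv1 Hvw Hw1 (on_segment_sym _ _ _ Sv) Sw) as [E1 E2].
  split; [|exact E1].
  pose proof (tree v Hv). pose proof (tree w Hw).
  apply injective_pos; [lia | lia | congruence].
Qed.

Lemma planar : planar_drawing n par pos.
Proof.
  intros v w Hv Hw Hvw P Sv Sw.
  destruct (desc_trichotomy n par tree v w ltac:(lia) ltac:(lia))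
    as [H | [H | (c1 & c2 & H1 & H2 & H12 & Hp & Hc1 & Hc2)]].
  - destruct (planar_nested v w Hv Hw H Hvw P Sv Sw) as [E ->].
    exists w. split; [left; congruence | split; [right | ]; reflexivity].
  - destruct (planar_nested w v Hw Hv H (not_eq_sym Hvw) P Sw Sv) as [E ->].
    exists v. split; [right; reflexivity | split; [left; congruence | reflexivity]].
  - destruct (planar_siblings v w c1 c2 Hv Hw H1 H2 H12 Hp Hc1 Hc2 P Sv Sw) as [E ->].
    exists (par v). split; [left | split; [left |]]; congruence.
Qed.

End SlopeDisjointDrawing.

Theorem theorem3 (n : nat) (par : nat -> nat) (pos : nat -> point) :
  rooted_tree n par -> drawing n pos ->
  non_strictly_slope_disjoint n par pos ->
  monotone_drawing n par pos /\ planar_drawing n par pos.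
Proof.
  intros Htree Hdraw (a1 & a2 & Hrange & Hsub & Hentry & _ & Hsib).
  split; [eapply monotone | eapply planar]; eassumption.
Qed.
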